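(* Let $A\in\mathbb{R}^{d\times d}$, $B\in\mathbb{R}^{d\times n}$, $M=\begin{bmatrix}Q&S^*\\S&R\end{bmatrix}$ symmetric with $Q\in\mathbb{R}^{d\times d}$, $S\in\mathbb{R}^{n\times d}$, $R\in\mathbb{R}^{n\times n}$, and let $\rho>0$, $\delta\ge0$. For $\lambda\ge0$ set \[ M(\delta,\lambda)=\begin{bmatrix} Q & S^* & 0\\ S & R+\lambda\delta^2 I & 0\\ 0&0&-\lambda I\end{bmatrix},\qquad B_2=\begin{bmatrix} B & B\end{bmatrix}\in\mathbb{R}^{d\times 2n}. \] If there exists $N\in\mathbb{R}^{n\times d}$ such that $A+BN$ is $\rho$-Schur and $Q+2\,\Re\,S^*N+N^*RN\ge0$, then $(A,B_2,M(\delta,\lambda))$ is $\rho$-minimally stable for every $\lambda\ge0$.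
   Context: For a triple $(\mathcal{A},\mathcal{B},\mathcal{M})$ with $\mathcal{A}\in\mathbb{R}^{d\times d}$, $\mathcal{B}\in\mathbb{R}^{d\times q}$ and symmetric $\mathcal{M}=\begin{bmatrix}Q'&S'^*\\S'&R'\end{bmatrix}\in\mathbb{R}^{(d+q)\times(d+q)}$: sequences $(x,w)$ with $x(k)\in\mathbb{R}^d$, $w(k)\in\mathbb{R}^q$ lie in $\mathcal{B}(\mathcal{A},\mathcal{B})$ if $x(k+1)=\mathcal{A}x(k)+\mathcal{B}w(k)$, and in $\mathrm{IQC}(\mathcal{M},\rho)$ if $\sum_{k=0}^N\rho^{-2k}(\langle Q'x(k),x(k)\rangle+2\langle S'x(k),w(k)\rangle+\langle R'w(k),w(k)\rangle)\ge0$ for all $N\ge0$. The triple is $\rho$-minimally stable if for every $x_0\in\mathbb{R}^d$ there is $(x,w)\in\mathcal{B}(\mathcal{A},\mathcal{B})\cap\mathrm{IQC}(\mathcal{M},\rho)$ with $x(0)=x_0$ and $\rho^{-k}x(k)\to0$. For $(A,B_2,M(\delta,\lambda))$ the input is $w=(u,e)\in\mathbb{R}^{2n}$. A square matrix is $\rho$-Schur if its eigenvalues lie in the open disk of radius $\rho$. *)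

From HB Require Import structures.
From mathcomp Require Import all_boot all_order all_algebra.
From mathcomp Require Import complex.
From mathcomp Require Import all_classical all_reals all_analysis.
Set Implicit Arguments. Unset Strict Implicit. Unset Printing Implicit Defensive.
Import Order.TTheory GRing.Theory Num.Theory.
Import numFieldNormedType.Exports.
Local Open Scope classical_set_scope.
Local Open Scope ring_scope.

Section Defs.
Variable R : realType.

Definition rho_schur (d : nat) (rho : R) (A : 'M[R]_d) : Prop :=
  forall z : R[i], eigenvalue (map_mx (fun x : R => (x%:C)%C) A) z -> `|z| < (rho%:C)%C.

Definition psd (d : nat) (P : 'M[R]_d) : Prop :=
  forall x : 'cV[R]_d, 0 <= (x^T *m P *m x) 0 0.

Definition behav (d q : nat) (A : 'M[R]_d) (B : 'M[R]_(d, q))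
  (x : nat -> 'cV[R]_d) (w : nat -> 'cV[R]_q) : Prop :=
  forall k, x k.+1 = A *m x k + B *m w k.

Definition iqc (d q : nat) (M : 'M[R]_(d + q)) (rho : R)
  (x : nat -> 'cV[R]_d) (w : nat -> 'cV[R]_q) : Prop :=
  forall N : nat,
    0 <= \sum_(k < N.+1) rho ^- (2 * k) *
          (((x k)^T *m (ulsubmx M *m x k)) 0 0
           + 2 * ((w k)^T *m (dlsubmx M *m x k)) 0 0
           + ((w k)^T *m (drsubmx M *m w k)) 0 0).

Definition rho_min_stable (d q : nat) (rho : R) (A : 'M[R]_d)
  (B : 'M[R]_(d, q)) (M : 'M[R]_(d + q)) : Prop :=
  forall x0 : 'cV[R]_d, exists (x : nat -> 'cV[R]_d) (w : nat -> 'cV[R]_q),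
    [/\ behav A B x w, iqc M rho x w, x 0%N = x0 &
        (fun k => rho ^- k *: x k) @ \oo --> (0 : 'cV[R]_d)].

Definition Mdl (d n : nat) (Q : 'M[R]_d) (S : 'M[R]_(n, d)) (Rm : 'M[R]_n)
  (delta lambda : R) : 'M[R]_(d + (n + n)) :=
  block_mx Q (row_mx S^T 0)
           (col_mx S 0)
           (block_mx (Rm + (lambda * delta ^+ 2)%:M) 0 0 (- lambda%:M)).

End Defs.

From HB Require Import structures.
From mathcomp Require Import all_boot all_order all_algebra.
From mathcomp Require Import complex.
From mathcomp Require Import all_classical all_reals all_analysis.
From mathcomp Require Import lra.
Set Implicit Arguments. Unset Strict Implicit. Unset Printing Implicit Defensive.
Import Order.TTheory GRing.Theory Num.Theory.
Import numFieldNormedType.Exports.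
Local Open Scope classical_set_scope.
Local Open Scope ring_scope.

(* With the feedback u = N x and e = 0 the state is x(k) = (A + B N)^k x0, and
   the k-th summand of the IQC is rho^-2k (x' P x + lambda delta^2 |N x|^2)
   with P the positive semidefinite matrix of the hypothesis, so the IQC holds.
   For the decay, let z_1, ..., z_m be the eigenvalues of M = (A + B N) / rho;
   they have modulus < 1 and, by Cayley-Hamilton, (M - z_1) ... (M - z_m) = 0.
   Hence every entry of M^k x0 is annihilated by the composite of the
   difference operators u |-> u(k+1) - z_i u(k), and each of these reflects
   convergence to 0, since |u(k+1)| <= |z_i| |u(k)| + |u(k+1) - z_i u(k)| is a
   perturbed contraction. *)

Lemma perturbed_contraction_cvg0 (R : realType) (q : R) (a b : nat -> R) :
  0 <= q < 1 -> (forall k, 0 <= a k) -> (forall k, a k.+1 <= q * a k + b k) ->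
  b @ \oo --> 0 -> a @ \oo --> 0.
Proof.
move=> /andP[q_ge0 q_lt1] a_ge0 a_rec b_cvg0.
apply/cvgr0Pnorm_lt => e e_gt0.
have e2_gt0 : 0 < e / 2 by rewrite divr_gt0.
have [K _ b_small] : \forall k \near \oo, `|b k| < e / 2 * (1 - q).
  by apply: (cvgr0Pnorm_lt b).1 => //; rewrite mulr_gt0 // subr_gt0.
(* The excess of a over e/2 contracts geometrically from K on. *)
pose c k := Num.max (a k - e / 2) 0.
have c_ge0 k : 0 <= c k by rewrite le_max lexx orbT.
have a_le_c k : a k - e / 2 <= c k by rewrite le_max lexx.
have c_contr k : (K <= k)%N -> c k.+1 <= q * c k.
  move=> /b_small /= bk; rewrite ge_max mulr_ge0 // andbT.
  have := ler_wpM2l q_ge0 (a_le_c k); have := a_rec k; have := ler_norm (b k).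
  lra.
have c_geom j : c (j + K)%N <= q ^+ j * c K.
  elim: j => [|j IH]; first by rewrite add0n expr0 mul1r.
  rewrite addSn exprS -mulrA; apply: le_trans (c_contr _ (leq_addl _ _)) _.
  exact: ler_wpM2l.
have c_cvg0 : c @ \oo --> 0.
  rewrite -(cvg_shiftn K).
  apply: (@squeeze_cvgr _ _ _ _ (cst 0) (fun j => q ^+ j * c K)).
  - by near=> j; rewrite c_ge0 c_geom.
  - exact: cvg_cst.
  - rewrite -(mul0r (c K)); apply: cvgM; last exact: cvg_cst.
    by apply: cvg_expr; rewrite ger0_norm.
apply: filterS ((cvgr0Pnorm_lt c).1 c_cvg0 _ e2_gt0) => k.
rewrite (ger0_norm (a_ge0 k)) (ger0_norm (c_ge0 k)).
have := a_le_c k; lra.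
Unshelve. all: by end_near.
Qed.

Section ComplexSequences.
Variable R : realType.
Local Notation C := R[i].
Local Notation normc := (@Normc.normc R).

Lemma normc_ge0 (z : C) : 0 <= normc z.
Proof. by case: z => a b; rewrite /= sqrtr_ge0. Qed.

Lemma normc_real (r : R) : normc (r%:C)%C = `|r|.
Proof. by rewrite /= expr0n addr0 sqrtr_sqr. Qed.

Definition shiftsub (z : C) (u : nat -> C) k := u k.+1 - z * u k.

Lemma shiftsub_cvg0 z u : normc z < 1 ->
  (fun k => normc (shiftsub z u k)) @ \oo --> 0 ->
  (fun k => normc (u k)) @ \oo --> 0.
Proof.
move=> z_lt1; apply: (@perturbed_contraction_cvg0 _ (normc z)).
- by rewrite normc_ge0 z_lt1.
- by move=> k; exact: normc_ge0.
move=> k; rewrite -Normc.normcM; apply: le_trans (le_normcD _ _).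
by rewrite /shiftsub addrC subrK.
Qed.

Lemma foldr_shiftsub_cvg0 rs u : {in rs, forall z, normc z < 1} ->
  (fun k => normc (foldr shiftsub u rs k)) @ \oo --> 0 ->
  (fun k => normc (u k)) @ \oo --> 0.
Proof.
elim: rs => [|z rs IH] //= rs_lt1 /(shiftsub_cvg0 (rs_lt1 _ (mem_head _ _))).
by apply: IH => y y_rs; apply: rs_lt1; rewrite in_cons y_rs orbT.
Qed.

Variable n : nat.
Implicit Types (M : 'M[C]_n.+1) (v : 'cV[C]_n.+1).

Lemma shiftsub_mxpow M v z i :
  shiftsub z (fun k => (M ^+ k *m v) i 0) =
  (fun k => (M ^+ k *m ((M - z%:M) *m v)) i 0).
Proof.
apply: funext => k.
rewrite /shiftsub mulmxBl mul_scalar_mx mulmxBr -scalemxAr mulmxA.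
by change (M ^+ k *m M) with (M ^+ k * M); rewrite -exprSr !mxE.
Qed.

Lemma foldr_shiftsub_mxpow M v rs i :
  foldr shiftsub (fun k => (M ^+ k *m v) i 0) rs =
  (fun k => (M ^+ k *m (\prod_(z <- rs) (M - z%:M) *m v)) i 0).
Proof.
elim: rs => [|z rs IH] /=; first by rewrite big_nil mul1mx.
by rewrite IH shiftsub_mxpow big_cons -mulmxA.
Qed.

Lemma Cayley_Hamilton_factored M :
  exists rs, \prod_(z <- rs) (M - z%:M) = 0 /\ {in rs, forall z, eigenvalue M z}.
Proof.
have [rs char_rs] := closed_field_poly_normal (char_poly M).
rewrite (monicP (char_poly_monic M)) scale1r in char_rs.
exists rs; split.
  have := Cayley_Hamilton M; rewrite char_rs rmorph_prod.
  by under eq_bigr do rewrite rmorphB /= horner_mx_X horner_mx_C.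
by move=> z z_rs; rewrite eigenvalue_root_char char_rs root_prod_XsubC.
Qed.

Lemma mxpow_cvg0 M v i : (forall z, eigenvalue M z -> normc z < 1) ->
  (fun k => normc ((M ^+ k *m v) i 0)) @ \oo --> 0.
Proof.
move=> eig_lt1; have [rs [rs_prod0 rs_eig]] := Cayley_Hamilton_factored M.
apply: (foldr_shiftsub_cvg0 (rs := rs)) => [z /rs_eig/eig_lt1 //|].
rewrite foldr_shiftsub_mxpow rs_prod0 mul0mx.
under eq_fun do rewrite mulmx0 mxE Normc.normc0.
exact: cvg_cst.
Qed.

End ComplexSequences.

Lemma cvg0_entrywise (R : realType) m n (X : nat -> 'M[R]_(m, n)) :
  (forall i j, (fun k => X k i j) @ \oo --> 0) -> X @ \oo --> (0 : 'M[R]_(m, n)).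
Proof.
move=> X_cvg0; apply/cvgr0Pnorm_lt => e e_gt0.
have : \forall k \near \oo, forall ij : 'I_m * 'I_n, `|X k ij.1 ij.2| < e.
  apply: filter_forall => -[i j].
  exact: (cvgr0Pnorm_lt _).1 (X_cvg0 i j) e e_gt0.
apply: filterS => k X_small; change (mx_norm (X k) < e); rewrite mx_normrE.
by apply: (big_ind (fun x => x < e)) => // x y; rewrite gt_max => -> ->.
Qed.

Lemma rho_schur_eigenvalue_lt1 (R : realType) d (M : 'M[R]_d) (rho : R) z :
  0 < rho -> rho_schur rho M ->
  eigenvalue (map_mx (real_complex R) (rho^-1 *: M)) z -> Normc.normc z < 1.
Proof.
move=> rho_gt0 M_schur /eigenvalueP [v v_eig v_neq0].
have rhoC_gt0 : 0 < (rho%:C)%C by rewrite ltcR.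
have : `|z * (rho%:C)%C| < (rho%:C)%C.
  apply: M_schur; apply/eigenvalueP; exists v => //.
  rewrite -[M](scalerKV (lt0r_neq0 rho_gt0)) map_mxZ -scalemxAr v_eig.
  by rewrite scalerA mulrC.
rewrite normrM (gtr0_norm rhoC_gt0) -ltr_pdivlMr // divff ?gt_eqF //.
by rewrite -(rmorph1 (real_complex R)) ltcR.
Qed.

Lemma rho_schur_pow_cvg0 (R : realType) d (M : 'M[R]_d) (rho : R) (x0 : 'cV[R]_d) :
  0 < rho -> rho_schur rho M ->
  (fun k => rho ^- k *: (M ^+ k *m x0)) @ \oo --> (0 : 'cV[R]_d).
Proof.
move=> rho_gt0 M_schur; apply: cvg0_entrywise => i j; apply/norm_cvg0P.
case: d M x0 i M_schur => [|d] M x0 i M_schur; first by case: i.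
pose toC := map_mx (real_complex R).
have entryC k : `|(rho ^- k *: (M ^+ k *m x0)) i j| =
    Normc.normc ((toC _ _ (rho^-1 *: M) ^+ k *m toC _ _ x0) i 0).
  rewrite scalemxAl -exprVn -exprZn -rmorphXn -map_mxM.
  by rewrite [in RHS]mxE normc_real (ord1 j).
under eq_fun do rewrite entryC.
exact: mxpow_cvg0 (fun z => rho_schur_eigenvalue_lt1 (z := z) rho_gt0 M_schur).
Qed.

Section QuadraticForms.
Variables (R : realType) (d n : nat).
Variables (Q : 'M[R]_d) (S : 'M[R]_(n, d)) (Rm : 'M[R]_n).

Lemma closed_loop_quad_form (N : 'M[R]_(n, d)) (x : 'cV[R]_d) :
  (x^T *m (Q + (S^T *m N + N^T *m S) + N^T *m Rm *m N) *m x) 0 0 =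
  (x^T *m (Q *m x)) 0 0 + 2 * ((N *m x)^T *m (S *m x)) 0 0
  + ((N *m x)^T *m (Rm *m (N *m x))) 0 0.
Proof.
have scalar_tr (P : 'M[R]_1) : P^T 0 0 = P 0 0 by rewrite mxE.
have cross : (x^T *m (S^T *m N) *m x) 0 0 = ((N *m x)^T *m (S *m x)) 0 0.
  by rewrite -scalar_tr !trmx_mul !trmxK !mulmxA.
have entryD (P1 P2 : 'M[R]_1) : (P1 + P2) 0 0 = P1 0 0 + P2 0 0 by rewrite mxE.
by rewrite !mulmxDr !mulmxDl !entryD cross trmx_mul !mulmxA mulr_natl mulr2n.
Qed.

Variables (delta lambda : R).
Local Notation M := (Mdl Q S Rm delta lambda).

Lemma Mdl_quad_form (x : 'cV[R]_d) (u : 'cV[R]_n) :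
  (x^T *m (ulsubmx M *m x)) 0 0 + 2 * ((col_mx u 0)^T *m (dlsubmx M *m x)) 0 0
  + ((col_mx u 0)^T *m (drsubmx M *m col_mx u 0)) 0 0 =
  (x^T *m (Q *m x)) 0 0 + 2 * (u^T *m (S *m x)) 0 0 + (u^T *m (Rm *m u)) 0 0
  + lambda * delta ^+ 2 * (u^T *m u) 0 0.
Proof.
rewrite /Mdl block_mxKul block_mxKdl block_mxKdr tr_col_mx trmx0.
rewrite mul_col_mx mul_block_col !mul0mx !mulmx0 !addr0 !mul_row_col !mul0mx !addr0.
rewrite mulmxDl mulmxDr mul_scalar_mx -scalemxAr.
have entryDZ (P1 P2 : 'M[R]_1) c : (P1 + c *: P2) 0 0 = P1 0 0 + c * P2 0 0.
  by rewrite !mxE.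
by rewrite entryDZ addrA.
Qed.

Lemma Mdl_feedback_term_ge0 (N : 'M[R]_(n, d)) (x : 'cV[R]_d) :
  0 <= lambda -> psd (Q + (S^T *m N + N^T *m S) + N^T *m Rm *m N) ->
  0 <= (x^T *m (ulsubmx M *m x)) 0 0
       + 2 * ((col_mx (N *m x) 0)^T *m (dlsubmx M *m x)) 0 0
       + ((col_mx (N *m x) 0)^T *m (drsubmx M *m col_mx (N *m x) 0)) 0 0.
Proof.
move=> lambda_ge0 N_psd; rewrite Mdl_quad_form.
have := N_psd x; rewrite closed_loop_quad_form.
have Nx_sq_ge0 : 0 <= ((N *m x)^T *m (N *m x)) 0 0.
  by rewrite mxE; apply: sumr_ge0 => i _; rewrite !mxE -expr2 sqr_ge0.
have := mulr_ge0 (mulr_ge0 lambda_ge0 (sqr_ge0 delta)) Nx_sq_ge0.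
lra.
Qed.

End QuadraticForms.

Theorem lemma2p13 (R : realType) (d n : nat) (A : 'M[R]_d) (B : 'M[R]_(d, n))
  (Q : 'M[R]_d) (S : 'M[R]_(n, d)) (Rm : 'M[R]_n) (rho delta : R) :
  Q^T = Q -> Rm^T = Rm -> 0 < rho -> 0 <= delta ->
  (exists N : 'M[R]_(n, d),
      rho_schur rho (A + B *m N) /\
      psd (Q + (S^T *m N + N^T *m S) + N^T *m Rm *m N)) ->
  forall lambda : R, 0 <= lambda ->
    rho_min_stable rho A (row_mx B B) (Mdl Q S Rm delta lambda).
Proof.
move=> _ _ rho_gt0 _ [N [ABN_schur N_psd]] lambda lambda_ge0 x0.
pose x k := (A + B *m N) ^+ k *m x0.
exists x, (fun k => col_mx (N *m x k) 0); split.
- move=> k; rewrite mul_row_col mulmx0 addr0 /x exprS -mulmxE.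
  by rewrite -mulmxA mulmxDl !mulmxA.
- move=> K; apply: sumr_ge0 => k _.
  apply: mulr_ge0; last exact: Mdl_feedback_term_ge0.
  by rewrite invr_ge0 exprn_ge0 // ltW.
- by rewrite /x expr0 mul1mx.
- exact: rho_schur_pow_cvg0.
Qed.
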